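(* Let $\mathcal{A}$ be a unital $\mathbb{F}$-algebra of dimension $n\ge2$ and let $S$ be a generating set of $\mathcal{A}$ with $l(S)\ge2$. Let $M=(m_0,\ldots,m_{n-1})$ be the characteristic sequence of $S$, and let $k_1$ be the index with $m_{k_1}=1$ and $m_{k_1+1}>1$. Then there exist a basis $\{e_0,\ldots,e_{n-1}\}$ of $\mathcal{A}$ and functions $t_1,t_2:\{k_1+1,\ldots,n-1\}\to\{1,\ldots,n-1\}$ such that: (1) for every $i\in\{0,\ldots,n-1\}$, $e_i$ is a word in $S$ of length $m_i$; (2a) for every $k$ with $k_1<k<n$, $m_{t_1(k)}+m_{t_2(k)}=m_k$ and $t_1(k),t_2(k)<k$; (2b) for all $h_1,h_2$ with $k_1<h_1<h_2<n$, at least one of $t_1(h_1)<t_1(h_2)$ or $t_2(h_1)<t_2(h_2)$ holds; (3) for every $k$ with $k_1<k<n$, $e_{t_1(k)}e_{t_2(k)}=e_k$; (4) $L_1(S)=\langle e_0,\ldots,e_{k_1}\rangle$.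
   Context: Algebras are finite-dimensional, unital, not necessarily associative, over a field $\mathbb{F}$. For a finite generating set $S$ of $\mathcal{A}$, a word in $S$ is any product (with any bracketing) of finitely many elements of $S$; its length is the number of factors, and $1$ is a word of length $0$. $L_i(S)$ is the linear span of all words in $S$ of length at most $i$ (so $L_0(S)=\mathbb{F}$); $l(S)=\min\{k\ge0: L_k(S)=\mathcal{A}\}$. The characteristic sequence of $S$ is the non-decreasing sequence $(m_0,\ldots,m_{n-1})$ constructed as follows: $m_0=0$; with $s_1=\dim L_1(S)-1$, set $m_1=\cdots=m_{s_1}=1$; inductively, if $m_1,\ldots,m_r$ are defined using $L_1(S),\ldots,L_{k-1}(S)$, put $s_k=\dim L_k(S)-\dim L_{k-1}(S)$ and set $m_{r+1}=\cdots=m_{r+s_k}=k$. (The sequence has $n=\dim\mathcal{A}$ terms.) $\langle\cdot\rangle$ denotes linear span. *)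

(* A finite-dimensional, unital, not necessarily associative
   F-algebra is modelled as a finite-dimensional F-vector space A : vectType F
   together with a bilinear multiplication [mul] and a two-sided unit [one]. *)
From HB Require Import structures.
From mathcomp Require Import all_boot all_order all_algebra.
Set Implicit Arguments. Unset Strict Implicit. Unset Printing Implicit Defensive.
Import GRing.Theory.
Local Open Scope ring_scope.

Section Words.
Variables (F : fieldType) (A : vectType F) (mul : A -> A -> A) (one : A).
Variable S : seq A.

(* [wordsF f i] : the (multi)list of all words in S of length i (all
   bracketings), computed with fuel f (correct whenever i < f).
   The word of length 0 is [one]. *)
Fixpoint wordsF (f i : nat) : seq A :=
  match f with
  | 0 => [::]
  | f'.+1 =>
    if i == 0%N then [:: one]
    else if i == 1%N then S
    else flatten [seq allpairs mul (wordsF f' j) (wordsF f' (i - j))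
                 | j <- iota 1 i.-1]
  end.

Definition words (i : nat) : seq A := wordsF i.+1 i.

Definition Lspan (i : nat) : {vspace A} :=
  (<< flatten [seq words j | j <- iota 0 i.+1] >>)%VS.

Definition is_length (l : nat) : Prop :=
  Lspan l = fullv /\ forall k, (k < l)%N -> Lspan k <> fullv.

(* characteristic sequence of S, given l = l(S), built literally:
   m_0 = 0, then s_k := dim L_k - dim L_{k-1} copies of k, k = 1..l
   (note s_1 = dim L_1 - 1 = dim L_1 - dim L_0). *)
Definition charseq (l : nat) : seq nat :=
  0%N :: flatten [seq nseq (\dim (Lspan k) - \dim (Lspan k.-1)) k
                 | k <- iota 1 l].
End Words.

From Pilot Require Import Defs.
From HB Require Import structures.
From mathcomp Require Import all_boot all_order all_algebra zify.
Set Implicit Arguments. Unset Strict Implicit. Unset Printing Implicit Defensive.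
Import GRing.Theory.
Local Open Scope ring_scope.

(* The basis is built level by level.  Level 0 is the unit and level 1 greedily extends it by
   elements of S.  For j >= 1 a word of length j+1 is a product of two words of lengths at
   most j; expanding both factors in the basis built so far shows, by bilinearity and the unit
   laws, that L_{j+1} is spanned by L_j and the products e_a e_b with m_a, m_b > 0 and
   m_a + m_b = j+1.  Extending greedily by these products, scanned in lexicographic order of
   (a, b), adds dim L_{j+1} - dim L_j vectors of degree j+1 together with their factor indices.
   Condition (2b) holds inside a level because the scan is lexicographic, and across levels
   because m is nondecreasing. *)

Lemma free_cat_mask (K : fieldType) (vT : vectType K) (B C : seq vT) : free B ->
  exists m, free (B ++ mask m C) /\ <<B ++ mask m C>>%VS = <<B ++ C>>%VS.
Proof.
elim: C B => [|c C IHC] B freeB; first by exists [::]; rewrite /= cats0.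
have [cB | cNB] := boolP (c \in <<B>>%VS).
  have [m [freeBm spanBm]] := IHC B freeB; exists (false :: m); split => //.
  rewrite spanBm !span_cat span_cons addvA.
  by congr (_ + _)%VS; apply/esym/addv_idPl; rewrite -memvE.
have freeBc : free (B ++ [:: c]).
  by rewrite (perm_free (permEl (perm_catC _ _))) /= free_cons cNB.
have [m [freeBcm spanBcm]] := IHC _ freeBc; exists (true :: m).
by rewrite /= -!cat_rcons -!cats1.
Qed.

Lemma ltn_divn_or_modn N c1 c2 :
  (c1 < c2)%N -> (c1 %/ N < c2 %/ N)%N \/ (c1 %% N < c2 %% N)%N.
Proof.
move=> lt12; have [|le21] := ltnP (c1 %/ N) (c2 %/ N); [by left | right].
have eq12 : (c1 %/ N = c2 %/ N)%N by apply/eqP; rewrite eqn_leq le21 leq_div2r // ltnW.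
move: (divn_eq c1 N) (divn_eq c2 N); rewrite eq12; lia.
Qed.

Lemma mkseq_nth_take (T : Type) (x0 : T) (s : seq T) k :
  (k <= size s)%N -> mkseq (nth x0 s) k = take k s.
Proof.
by move=> le_k; rewrite -{2}(mkseq_nth x0 s) /mkseq -map_take take_iota (minn_idPl le_k).
Qed.

Section WordBasis.
Variables (F : fieldType) (A : vectType F) (mul : A -> A -> A) (one : A).
Hypotheses (mul_linl : forall y : A, linear (fun x => mul x y))
  (mul_linr : forall x : A, linear (mul x))
  (mul1x : forall x, mul one x = x) (mulx1 : forall x, mul x one = x).
Variable S : seq A.

Local Notation words := (words mul one S).
Local Notation wordsF := (wordsF mul one S).
Local Notation Lspan := (Lspan mul one S).
Local Notation charseq := (charseq mul one S).

Definition mulL y : {linear A -> A} :=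
  HB.pack (fun x => mul x y) (GRing.isLinear.Build _ _ _ _ _ (mul_linl y)).
Definition mulR x : {linear A -> A} :=
  HB.pack (mul x) (GRing.isLinear.Build _ _ _ _ _ (mul_linr x)).

Lemma mul_span (X Y : seq A) (U : {vspace A}) u w :
  (u \in <<X>>)%VS -> (w \in <<Y>>)%VS ->
  (forall x y, x \in X -> y \in Y -> mul x y \in U) -> mul u w \in U.
Proof.
move=> /(@coord_span _ _ _ (in_tuple X)) -> /(@coord_span _ _ _ (in_tuple Y)) -> XYU.
rewrite -[mul _ _]/(mulL _ _) linear_sum; apply: memv_suml => i _.
rewrite linearZ memvZ //= -[mul _ _]/(mulR _ _) linear_sum; apply: memv_suml => k _.
by rewrite linearZ memvZ //= XYU // mem_nth.
Qed.

Lemma unit_neq0 : (0 < \dim (fullv : {vspace A}))%N -> one != 0.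
Proof.
rewrite lt0n dimv_eq0; apply: contraNneq => one0; rewrite -subv0.
by apply/subvP => x _; rewrite memv0 -(mul1x x) one0 -[mul 0 x]/(mulL x 0) linear0.
Qed.

Local Open Scope nat_scope.
(* Under nat_scope, [e`_i] would otherwise be elaborated with a [nat] default. *)
Local Notation "s `_ i" := (nth 0%R s i) : nat_scope.

Lemma wordsF_fuel f f' i : i < f -> i < f' -> wordsF f i = wordsF f' i.
Proof.
elim: f f' i => [|f IHf] [|f'] i //= ltif ltif'.
case: ifP => // /eqP ne0; case: ifP => // /eqP ne1.
congr flatten; apply/eq_in_map => p; rewrite mem_iota => /andP[p1 p2].
by rewrite (IHf f' p) ?(IHf f' (i - p)) //; lia.
Qed.

Lemma wordsE i : 1 < i ->
  words i = flatten [seq allpairs mul (words p) (words (i - p)) | p <- iota 1 i.-1].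
Proof.
move=> i_gt1; rewrite {1}/Defs.words [wordsF i.+1 i]/=.
case: ifP => [/eqP|_]; first lia.
case: ifP => [/eqP|_]; first lia.
congr flatten; apply/eq_in_map => p; rewrite mem_iota => /andP[p1 p2].
by rewrite (@wordsF_fuel i p.+1 p) ?(@wordsF_fuel i (i - p).+1 (i - p)) //; lia.
Qed.

Lemma words_mul p q u w : 0 < p -> 0 < q -> u \in words p -> w \in words q ->
  mul u w \in words (p + q).
Proof.
move=> p_gt0 q_gt0 up wq; rewrite wordsE; last lia.
apply/flattenP; exists (allpairs mul (words p) (words (p + q - p))).
  by apply: map_f; rewrite mem_iota; lia.
by rewrite addKn; apply: allpairs_f.
Qed.

Lemma words_split i w : 1 < i -> w \in words i ->
  exists p u u', [/\ 0 < p < i, u \in words p, u' \in words (i - p) & w = mul u u'].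
Proof.
move=> i_gt1; rewrite wordsE // => /flattenP[_ /mapP[p + ->]].
rewrite mem_iota => p_range /allpairsP[[u u'] [/= up u'p ->]].
by exists p, u, u'; split => //; lia.
Qed.

Lemma mem_Lspan i j w : i <= j -> w \in words i -> (w \in Lspan j)%VS.
Proof.
move=> le_ij wi; apply/memv_span/flattenP; exists (words i) => //.
by apply: map_f; rewrite mem_iota; lia.
Qed.

Lemma Lspan_subv j (U : {vspace A}) :
  (forall i w, i <= j -> w \in words i -> (w \in U)%VS) -> (Lspan j <= U)%VS.
Proof.
move=> wordsU; apply/span_subvP => w /flattenP[_ /mapP[i + ->]].
by rewrite mem_iota => i_range; apply: wordsU; lia.
Qed.

Lemma Lspan_mono i j : i <= j -> (Lspan i <= Lspan j)%VS.
Proof. by move=> le_ij; apply: Lspan_subv => k w le_kj; apply: mem_Lspan; lia. Qed.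

Lemma Lspan0 : Lspan 0 = <<[:: one]>>%VS.
Proof. by []. Qed.

Lemma Lspan1 : Lspan 1 = <<one :: S>>%VS.
Proof. by rewrite /Defs.Lspan /= cats0. Qed.

Definition deg j i := nth 0 (charseq j) i.

Lemma charseqS j :
  charseq j.+1 = charseq j ++ nseq (\dim (Lspan j.+1) - \dim (Lspan j)) j.+1.
Proof.
by rewrite /Defs.charseq -[j.+1]addn1 iotaD map_cat flatten_cat /= cats0 add1n addn1.
Qed.

Lemma size_charseqS j :
  size (charseq j.+1) = size (charseq j) + (\dim (Lspan j.+1) - \dim (Lspan j)).
Proof. by rewrite charseqS size_cat size_nseq. Qed.

Lemma leq_size_charseq p j : p <= j -> size (charseq p) <= size (charseq j).
Proof.
move=> /subnK <-; elim: (j - p) => [|k IHk] //.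
by rewrite addSn size_charseqS (leq_trans IHk) ?leq_addr.
Qed.

Lemma deg_le j i : deg j i <= j.
Proof.
rewrite /deg; have [lt_i|] := ltnP i (size (charseq j)); last by move/(nth_default 0) ->.
move: (mem_nth 0 lt_i); rewrite inE => /orP[/eqP -> //|].
by move=> /flattenP[_ /mapP[k + ->]]; rewrite mem_iota => k_range /nseqP[-> _]; lia.
Qed.

Lemma degS j i : i < size (charseq j) -> deg j.+1 i = deg j i.
Proof. by move=> lt_i; rewrite /deg charseqS nth_cat lt_i. Qed.

Lemma degS_new j i : size (charseq j) <= i < size (charseq j.+1) -> deg j.+1 i = j.+1.
Proof.
move=> /andP[le_i lt_i]; rewrite size_charseqS in lt_i.
by rewrite /deg charseqS nth_cat ifN -?leqNgt // nth_nseq ifT //; lia.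
Qed.

Lemma deg_leq j p i : p <= j -> i < size (charseq j) ->
  (deg j i <= p) = (i < size (charseq p)).
Proof.
elim: j => [|j IHj] le_pj lt_i.
  by rewrite leqn0 in le_pj; rewrite (eqP le_pj); case: i lt_i.
have [->|ne_pj] := eqVneq p j.+1; first by rewrite deg_le lt_i.
have {ne_pj}le_pj : p <= j by lia.
have [lt_ij|le_ji] := ltnP i (size (charseq j)); first by rewrite degS // IHj.
rewrite degS_new ?le_ji //; apply/idP/idP => [|lt_ip]; first lia.
by have := @leq_size_charseq p j le_pj; lia.
Qed.

Lemma deg_mono j a b : a <= b < size (charseq j) -> deg j a <= deg j b.
Proof.
move=> /andP[le_ab lt_b].
have lt_b' : b < size (charseq (deg j b)) by rewrite -(@deg_leq j) ?deg_le.
by rewrite (@deg_leq j) ?deg_le //; apply: leq_ltn_trans le_ab _.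
Qed.

Lemma deg_eq0 j i : i < size (charseq j) -> (deg j i == 0) = (i == 0).
Proof. by move=> lt_i; rewrite -leqn0 deg_leq //; case: i lt_i. Qed.

Lemma deg_gt0_lt_size j i : 0 < deg j i -> i < size (charseq j).
Proof. by apply: contraTT; rewrite -!leqNgt leqn0 => /(nth_default 0)/eqP. Qed.

Lemma size_charseq_jump j p k : p <= j -> deg j k <= p < deg j k.+1 ->
  size (charseq p) = k.+1.
Proof.
move=> le_pj /andP[le_k lt_kS].
have lt_kS_size : k.+1 < size (charseq j) by apply: deg_gt0_lt_size; lia.
have := @deg_leq j p k le_pj (ltnW lt_kS_size); rewrite le_k => /esym lt_k.
by have := @deg_leq j p k.+1 le_pj lt_kS_size; rewrite leqNgt lt_kS => /esym/negbT; lia.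
Qed.

Record word_basis j (e : seq A) (t : nat -> nat * nat) : Prop := {
  size_word_basis : size e = size (charseq j);
  free_word_basis : free e;
  span_word_basis : forall p, p <= j -> <<take (size (charseq p)) e>>%VS = Lspan p;
  words_word_basis : forall i, i < size e -> e`_i \in words (deg j i);
  fac_word_basis : forall i, i < size e -> 1 < deg j i ->
    [/\ (t i).1 < i, (t i).2 < i, 0 < deg j (t i).1, 0 < deg j (t i).2
      & deg j (t i).1 + deg j (t i).2 = deg j i];
  mul_word_basis : forall i, i < size e -> 1 < deg j i ->
    e`_i = mul e`_(t i).1 e`_(t i).2;
  lex_word_basis : forall i1 i2, i1 < i2 < size e -> 1 < deg j i1 ->
    (t i1).1 < (t i2).1 \/ (t i1).2 < (t i2).2 }.

Lemma word_basis_span j e t : word_basis j e t -> <<e>>%VS = Lspan j.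
Proof.
move=> basis_e; rewrite -(span_word_basis basis_e) // take_oversize //.
by rewrite (size_word_basis basis_e).
Qed.

Lemma fac_word_basis_pos j e t k : word_basis j e t -> k < size e -> 1 < deg j k ->
  [/\ 0 < (t k).1 < k, 0 < (t k).2 < k & deg j (t k).1 + deg j (t k).2 = deg j k].
Proof.
move=> basis_e lt_k deg_k; have pos i : 0 < deg j i -> 0 < i.
  by move=> deg_i; rewrite lt0n -(deg_eq0 (deg_gt0_lt_size deg_i)) -lt0n.
have [lt_a lt_b a_gt0 b_gt0 deg_ab] := fac_word_basis basis_e lt_k deg_k.
by rewrite lt_a lt_b (pos _ a_gt0) (pos _ b_gt0).
Qed.

Definition extend_fac (N : nat) (t T : nat -> nat * nat) i :=
  if i < N then t i else T (i - N).

Section Extension.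
Variables (j : nat) (e X : seq A) (t T : nat -> nat * nat).
Hypotheses (basis_e : word_basis j e t)
  (free_eX : free (e ++ X)) (span_eX : <<e ++ X>>%VS = Lspan j.+1)
  (words_X : forall x, x \in X -> x \in words j.+1)
  (fac_X : 0 < j -> forall r, r < size X ->
     [/\ 0 < deg j (T r).1, 0 < deg j (T r).2, deg j (T r).1 + deg j (T r).2 = j.+1
       & X`_r = mul e`_(T r).1 e`_(T r).2])
  (lex_X : 0 < j -> forall r1 r2, r1 < r2 < size X ->
     (T r1).1 < (T r2).1 \/ (T r1).2 < (T r2).2).

Lemma size_extension : size (e ++ X) = size (charseq j.+1).
Proof.
rewrite size_charseqS -(size_word_basis basis_e) -(word_basis_span basis_e) -span_eX.
by rewrite (eqP free_eX) (eqP (free_word_basis basis_e)) size_cat addKn.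
Qed.

Lemma deg_extension_old i : i < size e -> deg j.+1 i = deg j i.
Proof. by rewrite (size_word_basis basis_e); apply: degS. Qed.

Lemma deg_extension_new i : size e <= i < size (e ++ X) -> deg j.+1 i = j.+1.
Proof. by rewrite size_extension (size_word_basis basis_e); apply: degS_new. Qed.

Lemma span_extension p : p <= j.+1 -> <<take (size (charseq p)) (e ++ X)>>%VS = Lspan p.
Proof.
rewrite leq_eqVlt ltnS => /orP[/eqP-> | le_pj]; first by rewrite -size_extension take_size.
rewrite takel_cat ?(span_word_basis basis_e) // (size_word_basis basis_e).
exact: leq_size_charseq.
Qed.

Lemma words_extension i : i < size (e ++ X) -> (e ++ X)`_i \in words (deg j.+1 i).
Proof.
move=> lt_i; rewrite nth_cat; have [lt_ie | le_ei] := ltnP i (size e).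
  by rewrite deg_extension_old // (words_word_basis basis_e).
rewrite deg_extension_new ?le_ei //; apply/words_X/mem_nth.
by rewrite ltn_subLR // -size_cat.
Qed.

Lemma fac_extension i : i < size (e ++ X) -> 1 < deg j.+1 i ->
  let a := (extend_fac (size e) t T i).1 in let b := (extend_fac (size e) t T i).2 in
  [/\ a < i, b < i, 0 < deg j.+1 a, 0 < deg j.+1 b & deg j.+1 a + deg j.+1 b = deg j.+1 i]
  /\ (e ++ X)`_i = mul (e ++ X)`_a (e ++ X)`_b.
Proof.
rewrite /extend_fac => lt_i; have [lt_ie | le_ei] := ltnP i (size e).
  rewrite deg_extension_old // => deg_i.
  have [lt_a lt_b a_gt0 b_gt0 deg_ab] := fac_word_basis basis_e lt_ie deg_i.
  rewrite !deg_extension_old ?(ltn_trans _ lt_ie) //.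
  rewrite !nth_cat lt_ie !(ltn_trans _ lt_ie) //.
  by split; [split | apply: (mul_word_basis basis_e)].
rewrite deg_extension_new ?le_ei // ltnS => j_gt0.
have lt_r : i - size e < size X by rewrite ltn_subLR // -size_cat.
have [a_gt0 b_gt0 deg_ab mul_ab] := fac_X j_gt0 lt_r.
have lt_a := deg_gt0_lt_size a_gt0; have lt_b := deg_gt0_lt_size b_gt0.
rewrite -(size_word_basis basis_e) in lt_a lt_b.
rewrite !deg_extension_old // !nth_cat lt_a lt_b (ltnNge i) le_ei /= -mul_ab.
by split => //; split => //; lia.
Qed.

Lemma lex_extension i1 i2 : i1 < i2 < size (e ++ X) -> 1 < deg j.+1 i1 ->
  let t' := extend_fac (size e) t T in
  (t' i1).1 < (t' i2).1 \/ (t' i1).2 < (t' i2).2.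
Proof.
move=> /andP[lt_12 lt_2]; rewrite /extend_fac size_cat in lt_2 *.
have [lt_2e | le_e2] := ltnP i2 (size e).
  rewrite (ltn_trans lt_12 lt_2e) deg_extension_old ?(ltn_trans lt_12) //.
  by apply: (lex_word_basis basis_e); rewrite lt_12.
have [lt_1e | le_e1] := ltnP i1 (size e); last first.
  rewrite deg_extension_new ?le_e1 ?size_cat ?(ltn_trans lt_12) // ltnS => /lex_X.
  by apply; lia.
rewrite deg_extension_old // => deg_1.
have [lt_a1 lt_b1 _ _ deg_ab1] := fac_word_basis basis_e lt_1e deg_1.
have j_gt0 : 0 < j by have := deg_le j i1; lia.
have lt_r2 : i2 - size e < size X by lia.
have [_ _ deg_ab2 _] := fac_X j_gt0 lt_r2.
have [lt_a|le_a] := ltnP (t i1).1 (T (i2 - size e)).1; first by left.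
have [lt_b|le_b] := ltnP (t i1).2 (T (i2 - size e)).2; first by right.
(* Componentwise [t' i2 <= t' i1] would give [j.+1 <= deg j i1 <= j], as [deg j] is monotone. *)
have size_e := size_word_basis basis_e.
have le_deg_a : deg j (T (i2 - size e)).1 <= deg j (t i1).1.
  by apply: deg_mono; rewrite le_a -size_e (ltn_trans lt_a1 lt_1e).
have le_deg_b : deg j (T (i2 - size e)).2 <= deg j (t i1).2.
  by apply: deg_mono; rewrite le_b -size_e (ltn_trans lt_b1 lt_1e).
by have := deg_le j i1; lia.
Qed.

Lemma word_basis_extension : word_basis j.+1 (e ++ X) (extend_fac (size e) t T).
Proof.
split; [exact: size_extension | exact: free_eX | exact: span_extension
  | exact: words_extension | | | exact: lex_extension].
- by move=> i lt_i deg_i; have [] := fac_extension lt_i deg_i.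
- by move=> i lt_i deg_i; have [] := fac_extension lt_i deg_i.
Qed.

End Extension.

(* The code [c] stands for the index pair [(c %/ N, c %% N)], so that increasing codes
   enumerate pairs in lexicographic order. *)
Definition level_codes j N := [seq c <- iota 0 (N * N) |
  [&& 0 < deg j (c %/ N), 0 < deg j (c %% N) & deg j (c %/ N) + deg j (c %% N) == j.+1]].

Definition code_product (e : seq A) c := mul e`_(c %/ size e) e`_(c %% size e).

Section Products.
Variables (j : nat) (e : seq A) (t : nat -> nat * nat).
Hypotheses (j_gt0 : 0 < j) (basis_e : word_basis j e t).

Let V := <<e ++ map (code_product e) (level_codes j (size e))>>%VS.

Lemma basis_in_product_span x : x \in e -> (x \in V)%VS.
Proof. by move=> xe; apply: memv_span; rewrite mem_cat xe. Qed.

Lemma Lspan_in_product_span w : (w \in Lspan j)%VS -> (w \in V)%VS.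
Proof. by rewrite -(word_basis_span basis_e) /V span_cat; apply/subvP/addvSl. Qed.

Lemma basis_mul_in_product_span a b : a < size e -> b < size e ->
  deg j a + deg j b <= j.+1 -> (mul e`_a e`_b \in V)%VS.
Proof.
move=> lt_a lt_b deg_ab.
have unit_of_deg0 i : i < size e -> deg j i = 0 -> e`_i = one.
  by move=> lt_i deg_i; have := words_word_basis basis_e lt_i; rewrite deg_i inE => /eqP.
have [deg_a | a_gt0] := posnP (deg j a).
  by rewrite unit_of_deg0 // mul1x basis_in_product_span // mem_nth.
have [deg_b | b_gt0] := posnP (deg j b).
  by rewrite (unit_of_deg0 b) // mulx1 basis_in_product_span // mem_nth.
have words_ab := words_mul a_gt0 b_gt0
  (words_word_basis basis_e lt_a) (words_word_basis basis_e lt_b).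
have [lt_ab | eq_ab] : deg j a + deg j b <= j \/ deg j a + deg j b = j.+1 by lia.
  exact/Lspan_in_product_span/(mem_Lspan lt_ab words_ab).
have e_gt0 : 0 < size e by lia.
have div_code : (a * size e + b) %/ size e = a by rewrite divnMDl // divn_small ?addn0.
have mod_code : (a * size e + b) %% size e = b by rewrite modnMDl modn_small.
apply/memv_span; rewrite mem_cat; apply/orP; right; apply/mapP; exists (a * size e + b).
  by rewrite mem_filter mem_iota div_code mod_code a_gt0 b_gt0 eq_ab eqxx /=; nia.
by rewrite /code_product div_code mod_code.
Qed.

Lemma code_product_words c :
  c \in level_codes j (size e) -> code_product e c \in words j.+1.
Proof.
rewrite mem_filter => /andP[/and3P[a_gt0 b_gt0 /eqP <-] _].
have lt_size k : 0 < deg j k -> k < size e.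
  by rewrite (size_word_basis basis_e); apply: deg_gt0_lt_size.
exact: words_mul a_gt0 b_gt0 (words_word_basis basis_e (lt_size _ a_gt0))
  (words_word_basis basis_e (lt_size _ b_gt0)).
Qed.

Lemma Lspan_succ_product_span : Lspan j.+1 = V.
Proof.
have size_e := size_word_basis basis_e.
apply/eqP; rewrite eqEsubv; apply/andP; split; last first.
  apply/span_subvP => x; rewrite mem_cat => /orP[xe | /mapP[c + ->]].
    apply: (subvP (Lspan_mono (leqnSn j))).
    by rewrite -(word_basis_span basis_e); apply: memv_span.
  by move=> /code_product_words; apply: mem_Lspan.
apply: Lspan_subv => i w; rewrite leq_eqVlt ltnS => /orP[/eqP -> | le_ij] wi; last first.
  exact/Lspan_in_product_span/(mem_Lspan le_ij wi).
have [p [u [u' [/andP[p_gt0 lt_pj] up u'q ->]]]] := @words_split j.+1 w j_gt0 wi.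
pose q := j.+1 - p.
have le_pj : p <= j by lia.
have le_qj : q <= j by lia.
have mem_prefix k v : k <= j -> v \in words k -> (v \in <<take (size (charseq k)) e>>)%VS.
  by move=> le_kj vk; rewrite (span_word_basis basis_e) // (mem_Lspan (leqnn k)).
apply: (mul_span (mem_prefix p u le_pj up) (mem_prefix q u' le_qj u'q)).
move=> x y /(nthP 0%R)[a + <-] /(nthP 0%R)[b + <-].
have le_prefix k : k <= j -> size (charseq k) <= size e.
  by move=> le_kj; rewrite size_e leq_size_charseq.
rewrite !size_takel ?le_prefix // => lt_a lt_b; rewrite !nth_take //.
have lt_a' := leq_trans lt_a (le_prefix p le_pj).
have lt_b' := leq_trans lt_b (le_prefix q le_qj).
apply: basis_mul_in_product_span => //.
rewrite size_e in lt_a' lt_b'.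
by have := deg_leq le_pj lt_a'; have := deg_leq le_qj lt_b'; rewrite lt_a lt_b; lia.
Qed.

End Products.

Lemma word_basis_unit : one != 0%R -> word_basis 0 [:: one] (fun=> (0, 0)).
Proof.
move=> one_neq0; split => //.
- by rewrite free_cons span_nil memv0 one_neq0 nil_free.
- by move=> p; rewrite leqn0 => /eqP ->.
- by case=> // _; apply: mem_head.
- by move=> i _; have := deg_le 0 i; lia.
- by move=> i _; have := deg_le 0 i; lia.
- by move=> [|i1] [|i2] /andP[].
Qed.

Lemma word_basis_generators e t : word_basis 0 e t ->
  exists X, word_basis 1 (e ++ X) (extend_fac (size e) t (fun=> (0, 0))).
Proof.
move=> basis_e; have [m [free_eX span_eX]] := free_cat_mask S (free_word_basis basis_e).
exists (mask m S); apply: word_basis_extension => //.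
- rewrite span_eX span_cat (word_basis_span basis_e) Lspan0 Lspan1.
  by rewrite !span_cons span_nil addv0.
- by move=> x /mem_mask.
Qed.

Lemma word_basis_products j e t : 0 < j -> word_basis j e t ->
  exists X T, word_basis j.+1 (e ++ X) (extend_fac (size e) t T).
Proof.
move=> j_gt0 basis_e; set C := level_codes j (size e).
have [m [free_eX span_eX]] :=
  free_cat_mask (map (code_product e) C) (free_word_basis basis_e).
pose T r := let c := nth 0 (mask m C) r in (c %/ size e, c %% size e).
exists (mask m (map (code_product e) C)), T; apply: word_basis_extension => //.
- by rewrite span_eX (Lspan_succ_product_span j_gt0 basis_e).
- by move=> x /mem_mask /mapP[c c_in ->]; exact: (code_product_words basis_e c_in).
- move=> _ r; rewrite -map_mask size_map => lt_r; rewrite (nth_map 0) //.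
  have /mem_mask := mem_nth 0 lt_r.
  by rewrite mem_filter => /andP[/and3P[a_gt0 b_gt0 /eqP deg_ab] _].
- move=> _ r1 r2 /andP[lt_12 lt_2]; rewrite -map_mask size_map in lt_2.
  apply: ltn_divn_or_modn; apply: (sorted_ltn_nth ltn_trans) => //; last first.
    by rewrite inE (ltn_trans lt_12).
  exact/sorted_mask/sorted_filter/iota_ltn_sorted/ltn_trans/ltn_trans.
Qed.

Lemma word_basis_exists j : one != 0%R -> exists e t, word_basis j e t.
Proof.
move=> one_neq0; elim: j => [|[|j] [e [t basis_e]]].
- by exists [:: one], (fun=> (0, 0)); apply: word_basis_unit.
- have [X basis_eX] := word_basis_generators basis_e.
  by exists (e ++ X), (extend_fac (size e) t (fun=> (0, 0))).
- have [X [T basis_eX]] := word_basis_products (ltn0Sn j) basis_e.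
  by exists (e ++ X), (extend_fac (size e) t T).
Qed.

End WordBasis.

Theorem proposition5p6 (F : fieldType) (A : vectType F)
  (mul : A -> A -> A) (one : A)
  (mul_linl : forall y : A, linear (fun x => mul x y))
  (mul_linr : forall x : A, linear (mul x))
  (mul1x : forall x, mul one x = x) (mulx1 : forall x, mul x one = x)
  (S : seq A) (l : nat) (k1 : nat) :
  let n := \dim (fullv : {vspace A}) in
  let M := charseq mul one S l in
  (2 <= n)%N ->
  is_length mul one S l -> (2 <= l)%N ->
  nth 0%N M k1 = 1%N -> (1 < nth 0%N M k1.+1)%N ->
  exists (e : nat -> A) (t1 t2 : nat -> nat),
    basis_of fullv (mkseq e n) /\
    [/\ (* (1) *)
        (forall i, (i < n)%N -> e i \in words mul one S (nth 0%N M i)),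
        (* (2a) *)
        (forall k, (k1 < k < n)%N ->
           [/\ (1 <= t1 k <= n.-1)%N, (1 <= t2 k <= n.-1)%N,
               (nth 0%N M (t1 k) + nth 0%N M (t2 k) = nth 0%N M k)%N,
               (t1 k < k)%N & (t2 k < k)%N]),
        (* (2b) *)
        (forall h1 h2, (k1 < h1)%N -> (h1 < h2)%N -> (h2 < n)%N ->
           (t1 h1 < t1 h2)%N \/ (t2 h1 < t2 h2)%N),
        (* (3) *)
        (forall k, (k1 < k < n)%N -> mul (e (t1 k)) (e (t2 k)) = e k) &
        (* (4) *)
        Lspan mul one S 1 = (<< mkseq e k1.+1 >>)%VS].
Proof.
move=> n M n_gt1 [Lspan_l _] l_gt1 M_k1 M_k1S.
have [e [t basis_e]] := word_basis_exists mul_linl mul_linr mul1x mulx1 S l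
  (unit_neq0 mul_linl mul1x (ltnW n_gt1)).
have span_e : <<e>>%VS = fullv by rewrite (word_basis_span basis_e).
have size_e : size e = n by rewrite /n -span_e (eqP (free_word_basis basis_e)).
have size1 : size (charseq mul one S 1) = k1.+1.
  apply: (size_charseq_jump (j := l)); first exact: ltnW.
  by change (nth 0 M k1 <= 1 < nth 0 M k1.+1)%N; rewrite M_k1 M_k1S.
have deg_gt1 k : (k1 < k < size e)%N -> (1 < nth 0 M k)%N.
  move=> /andP[lt_k1k lt_k]; apply: leq_trans M_k1S _.
  by apply: deg_mono; rewrite lt_k1k -(size_word_basis basis_e).
exists (nth 0 e), (fun k => (t k).1), (fun k => (t k).2); rewrite -size_e mkseq_nth.
split; first by rewrite /basis_of span_e eqxx (free_word_basis basis_e).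
split.
- exact: (words_word_basis basis_e).
- move=> k k_range; have lt_k : (k < size e)%N by case/andP: k_range.
  have [/andP[a_gt0 lt_a] /andP[b_gt0 lt_b] deg_ab] :=
    fac_word_basis_pos basis_e lt_k (deg_gt1 k k_range).
  by split; [lia | lia | exact: deg_ab | lia | lia].
- move=> h1 h2 lt_1 lt_12 lt_2.
  by apply: (lex_word_basis basis_e); [rewrite lt_12 | apply: deg_gt1; lia].
- move=> k k_range; apply/esym/(mul_word_basis basis_e); last exact: deg_gt1.
  by case/andP: k_range.
- have le_k1S : (k1.+1 <= size e)%N.
    by rewrite -size1 (size_word_basis basis_e); apply/leq_size_charseq/ltnW.
  by rewrite mkseq_nth_take // -size1 (span_word_basis basis_e) // ltnW.
Qed.
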